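(* Let $n\geq 2$, and let $\varphi$ be a skew morphism of $\mathbb Z_n$ with complexity $c$ and auto-order $m$. Then: (a) $c\geq 0$ and $m\geq 2$; (b) $\varphi$ is the trivial permutation if and only if $c=0$; (c) $\varphi$ is a non-trivial automorphism if and only if $c=1$; (d) $\varphi$ is a proper skew morphism if and only if $c\geq 2$; (e) if $c\geq 1$, then $\varphi'$ has complexity $c-1$ and auto-order $m$; (f) if $c\geq 1$, then $\varphi^{(c-1)}$ is an automorphism of order $m$.
   Context: A skew morphism of a finite group $G$ is a permutation $\varphi$ of $G$ fixing the identity such that for each $a\in G$ there is a non-negative integer $\pi_{\varphi}(a)$ (the power function) with $\varphi(ab)=\varphi(a)\varphi^{\pi_{\varphi}(a)}(b)$ for all $b\in G$; ${\rm ord}(\varphi)$ is the order of $\langle\varphi\rangle$. A skew morphism is proper if it is not a group automorphism. For a skew morphism $\varphi$ of $\mathbb Z_n$, the derived skew morphism $\varphi'$ is the skew morphism of $\mathbb Z_{{\rm ord}(\varphi)}$ given by $\varphi'(a)=\sigma_{\varphi}(a,1)=\sum_{0\leq i\leq a-1}\pi_{\varphi}(\varphi^i(1))$ (taken in $\mathbb Z_{{\rm ord}(\varphi)}$). For $n\geq 2$, since ${\rm ord}(\varphi)<n$, repeatedly taking derived skew morphisms eventually yields a skew morphism of a non-trivial cyclic group that is the trivial permutation (and whose derived skew morphism is the identity of the trivial group). Writing $\varphi^{(0)}=\varphi$, $\varphi^{(1)}=\varphi'$, and in general $\varphi^{(i)}$ for $\varphi$ with the derived-skew-morphism operation applied $i$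 times, the complexity $c$ of $\varphi$ is the number of steps $c$ such that $\varphi^{(c)}$ is this trivial permutation of a non-trivial cyclic group $\mathbb Z_m$, and $m$ is called the auto-order of $\varphi$. *)

(* Z_n is modelled as the residues {0,..,n-1} in nat; a map
   Z_n -> Z_n is a function f : nat -> nat, of which only the values on
   [0, n) matter. *)
From mathcomp Require Import all_boot.
Set Implicit Arguments. Unset Strict Implicit. Unset Printing Implicit Defensive.

Definition is_perm_on (n : nat) (f : nat -> nat) : Prop :=
  (forall x, x < n -> f x < n) /\
  (forall x y, x < n -> y < n -> f x = f y -> x = y).

Definition is_skew (n : nat) (f : nat -> nat) : Prop :=
  is_perm_on n f /\ f 0 = 0 /\
  forall a, a < n -> exists k : nat,
    forall b, b < n -> f ((a + b) %% n) = (f a + iter k f b) %% n.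

Definition is_aut (n : nat) (f : nat -> nat) : Prop :=
  is_perm_on n f /\
  forall a b, a < n -> b < n -> f ((a + b) %% n) = (f a + f b) %% n.

Definition is_trivial (n : nat) (f : nat -> nat) : Prop :=
  forall x, x < n -> f x = x.

(* ord(f): the order of <f>, i.e. least k >= 1 with f^k = id on [0,n).
   For a permutation of n points this k is <= n`!, so searching in
   [0, n`!] finds it. *)
Definition sk_ord (n : nat) (f : nat -> nat) : nat :=
  find (fun k => (0 < k) && all (fun x => iter k f x == x) (iota 0 n))
       (iota 0 (n`!).+1).

(* the power function pi_f(a), normalised to its least representative in
   [0, ord f) (it is only determined modulo ord f) *)
Definition sk_pow (n : nat) (f : nat -> nat) (a : nat) : nat :=
  find (fun k => all (fun b => f ((a + b) %% n) == (f a + iter k f b) %% n)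
                      (iota 0 n))
       (iota 0 (sk_ord n f)).

(* derived skew morphism: a skew morphism of Z_{ord f}, given as a pair
   (modulus, map) with f'(a) = sum_{i<a} pi_f(f^i(1)) mod ord f *)
Definition sk_deriv (p : nat * (nat -> nat)) : nat * (nat -> nat) :=
  let: (n, f) := p in
  (sk_ord n f,
   fun a => (\sum_(i < a) sk_pow n f (iter i f 1)) %% sk_ord n f).

Definition sk_deriv_iter (i : nat) (n : nat) (f : nat -> nat) :=
  iter i sk_deriv (n, f).

Definition sk_complexity (n : nat) (f : nat -> nat) (c m : nat) : Prop :=
  let p := sk_deriv_iter c n f in
  p.1 = m /\ 2 <= m /\ is_trivial p.1 p.2.

From mathcomp Require Import all_boot all_fingroup zify.
Set Implicit Arguments. Unset Strict Implicit. Unset Printing Implicit Defensive.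

(* Everything rests on the identity
     f^k(a + z) = f^k(a) + f^(sigma(k, a))(z),   sigma(k, a) = sum_(i < k) pi(f^i(a)),
   whose exponent only matters modulo e = ord f.  Expanding f^b(u + v + z) in two ways
   gives the cocycle rule sigma(b, u + v) = sigma(sigma(b, u), v) (mod e), hence
   sigma(b, u) = f'^u(b) (mod e); it follows that f' = sigma(-, 1) mod e is a skew morphism
   of Z_e with power function a |-> f^a(1).  Further, f' is trivial iff pi(1) = 1 (mod e)
   iff f is an automorphism.  A trivial skew morphism has order 1, so all later
   derivatives live on Z_1: the complexity is the first index at which the sequence of
   derivatives becomes trivial, and (a)-(f) follow. *)

Lemma eq_modDl_small d y z w : z < d -> w < d -> y + z = y + w %[mod d] -> z = w.
Proof. by move=> z_lt w_lt /eqP; rewrite eqn_modDl !modn_small // => /eqP. Qed.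

Section PermutationOrder.

Variables (n : nat) (f : nat -> nat).
Hypothesis f_perm : is_perm_on n f.

Lemma iter_perm_lt k x : x < n -> iter k f x < n.
Proof. by case: f_perm => f_lt _ x_lt; elim: k => //= k IHk; apply: f_lt. Qed.

Lemma perm_on_period : exists2 k, 0 < k <= n`! & forall x, x < n -> iter k f x = x.
Proof.
case: f_perm => f_lt f_inj.
pose h (i : 'I_n) : 'I_n := Ordinal (f_lt i (ltn_ord i)).
have h_inj : injective h.
  by move=> i j /(congr1 val) /f_inj eq_ij; apply/val_inj/eq_ij.
pose p := perm h_inj.
have pE k (i : 'I_n) : val ((p ^+ k)%g i) = iter k f i.
  by elim: k => [|k IHk]; rewrite ?expg0 ?perm1 // expgSr permM permE /= IHk.
exists #[p]%g.
  by rewrite order_gt0 -(card_Sn n) -cardsT dvdn_leq ?cardSg ?subsetT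
             ?cardsT ?card_Sn ?fact_gt0.
by move=> x x_lt; rewrite -(pE _ (Ordinal x_lt)) expg_order perm1.
Qed.

Lemma sk_ordP :
  [/\ 0 < sk_ord n f, forall x, x < n -> iter (sk_ord n f) f x = x
    & forall k, 0 < k < sk_ord n f -> exists2 x, x < n & iter k f x != x].
Proof.
set P := fun k => (0 < k) && all (fun x => iter k f x == x) (iota 0 n).
have P_has : has P (iota 0 (n`!).+1).
  have [k /andP[k_gt0 k_le] k_id] := perm_on_period.
  apply/hasP; exists k; first by rewrite mem_iota.
  by rewrite /P k_gt0; apply/allP => x; rewrite mem_iota => /andP[_ x_lt]; rewrite k_id.
have e_lt : sk_ord n f < (n`!).+1 by rewrite -[X in _ < X](size_iota 0) -has_find.
have := nth_find 0 P_has; rewrite nth_iota // add0n => /andP[e_gt0 /allP e_id].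
split=> // [x x_lt | k /andP[k_gt0 k_lt]].
  by apply/eqP/e_id; rewrite mem_iota.
have := before_find 0 k_lt; rewrite nth_iota ?(ltn_trans k_lt) // add0n /P k_gt0.
by case/allPn => x; rewrite mem_iota; exists x.
Qed.

Local Notation e := (sk_ord n f).

Lemma iter_mod_ord k x : x < n -> iter k f x = iter (k %% e) f x.
Proof.
have [_ e_id _] := sk_ordP; move=> x_lt.
rewrite {1}(divn_eq k e) iterD.
by elim: (k %/ e) => // q IHq; rewrite mulSn iterD IHq e_id ?iter_perm_lt.
Qed.

Lemma sk_ord_dvd k : (forall x, x < n -> iter k f x = x) -> e %| k.
Proof.
have [e_gt0 _ e_min] := sk_ordP; move=> k_id.
apply: contraT; rewrite -lt0n => r_gt0.
have /e_min[x x_lt] : 0 < k %% e < e by rewrite r_gt0 ltn_pmod.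
by rewrite -iter_mod_ord // k_id // eqxx.
Qed.

Lemma eq_iter_mod_ord k k' :
  (forall x, x < n -> iter k f x = iter k' f x) -> k = k' %[mod e].
Proof.
move=> eq_k; have [e_gt0 _ _] := sk_ordP.
(* f^(e - k mod e) inverts f^k, and f^k agrees with f^k' on [0, n). *)
have e_dvd : e %| e - k %% e + k'.
  apply: sk_ord_dvd => x x_lt.
  rewrite iterD -eq_k // -iterD iter_mod_ord // -modnDmr subnK ?modnn //.
  by rewrite ltnW ?ltn_pmod.
move: e_dvd; rewrite {1}(divn_eq k' e) addnCA dvdn_addr ?dvdn_mull // => /dvdnP[q].
have := ltn_pmod k e_gt0; have := ltn_pmod k' e_gt0.
by case: q => [|[|q]]; rewrite ?mulSn; lia.
Qed.

End PermutationOrder.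

Definition sk_sigma (n : nat) (f : nat -> nat) (k a : nat) : nat :=
  \sum_(i < k) sk_pow n f (iter i f a).

Definition sk_deriv_map (n : nat) (f : nat -> nat) (a : nat) : nat :=
  sk_sigma n f a 1 %% sk_ord n f.

Lemma sk_sigmaD n f k l a :
  sk_sigma n f (k + l) a = sk_sigma n f k a + sk_sigma n f l (iter k f a).
Proof.
rewrite /sk_sigma big_split_ord /=; congr (_ + _).
by apply: eq_bigr => i _; rewrite addnC iterD.
Qed.

Section SkewMorphism.

Variables (n : nat) (f : nat -> nat).
Hypothesis f_skew : is_skew n f.

Local Notation e := (sk_ord n f).
Local Notation g := (sk_deriv_map n f).

Let f_perm : is_perm_on n f. Proof. by case: f_skew. Qed.
Let f0 : f 0 = 0. Proof. by case: f_skew => _ []. Qed.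
Let iter_lt := iter_perm_lt f_perm.
Let iter_mod := iter_mod_ord f_perm.
Let eq_iter_mod := eq_iter_mod_ord f_perm.
Let e_dvd := sk_ord_dvd f_perm.
Let e_id x : x < n -> iter e f x = x.
Proof. by case: (sk_ordP f_perm) => _ id_e _; apply: id_e. Qed.

Lemma sk_powP a b : a < n -> b < n ->
  f ((a + b) %% n) = (f a + iter (sk_pow n f a) f b) %% n.
Proof.
move=> a_lt; case: f_skew => _ [_ /(_ a a_lt)[k pi_k]].
set P := fun k => all (fun b => f ((a + b) %% n) == (f a + iter k f b) %% n) (iota 0 n).
have P_has : has P (iota 0 e).
  apply/hasP; exists (k %% e); first by rewrite mem_iota ltn_pmod.
  by apply/allP => x; rewrite mem_iota => /andP[_ x_lt]; rewrite -iter_mod ?pi_k.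
have pow_lt : sk_pow n f a < e by rewrite -[X in _ < X](size_iota 0) -has_find.
have := nth_find 0 P_has; rewrite nth_iota // add0n.
by move=> /allP P_pow b_lt; apply/eqP/P_pow; rewrite mem_iota.
Qed.

Lemma sk_sigmaP k a z : a < n -> z < n ->
  iter k f ((a + z) %% n) = (iter k f a + iter (sk_sigma n f k a) f z) %% n.
Proof.
move=> a_lt z_lt; elim: k => [|k IHk]; first by rewrite /sk_sigma big_ord0.
rewrite iterS IHk sk_powP ?iter_lt // -iterD /sk_sigma big_ord_recr /=.
by rewrite [_ + sk_pow _ _ _]addnC.
Qed.

Lemma sk_sigma_mod k y : y < n -> sk_sigma n f k y = sk_sigma n f (k %% e) y %[mod e].
Proof.
move=> y_lt; have dvd_sigma q : e %| sk_sigma n f (q * e) y.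
  elim: q => [|q IHq]; first by rewrite /sk_sigma big_ord0.
  rewrite mulSn sk_sigmaD iter_mod // modnn dvdn_add //.
  apply: e_dvd => // z z_lt; apply: (@eq_modDl_small n y); rewrite ?iter_lt //.
  by rewrite -{1}(e_id y_lt) -sk_sigmaP // e_id // ltn_pmod // (leq_ltn_trans _ y_lt).
rewrite {1}(divn_eq k e) sk_sigmaD iter_mod // modnMl.
by have /dvdnP[q ->] := dvd_sigma (k %/ e); rewrite modnMDl.
Qed.

Lemma sk_sigma0 b : 0 < n -> sk_sigma n f b 0 = b %[mod e].
Proof.
move=> n_gt0; apply: eq_iter_mod => // z z_lt.
have := sk_sigmaP b n_gt0 z_lt.
by rewrite add0n (iter_fix b f0) add0n !modn_small ?iter_lt // => ->.
Qed.

Lemma sk_sigma_cocycle b u v : u < n -> v < n ->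
  sk_sigma n f b ((u + v) %% n) = sk_sigma n f (sk_sigma n f b u) v %[mod e].
Proof.
move=> u_lt v_lt; have n_gt0 : 0 < n by apply: leq_ltn_trans u_lt.
apply: eq_iter_mod => // z z_lt.
set s := sk_sigma n f b u.
have w_lt : (u + v) %% n < n by rewrite ltn_pmod.
apply: (@eq_modDl_small n (iter b f u + iter s f v)); rewrite ?iter_lt //.
have uvz : ((u + v) %% n + z) %% n = (u + (v + z) %% n) %% n.
  by rewrite modnDml modnDmr addnA.
have := sk_sigmaP b w_lt z_lt; rewrite uvz (sk_sigmaP b u_lt v_lt) modnDml => <-.
by rewrite (sk_sigmaP b u_lt (ltn_pmod _ n_gt0)) (sk_sigmaP s v_lt z_lt) modnDmr addnA.
Qed.

Hypothesis n_gt1 : 1 < n.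

Lemma sk_sigma_iter b u : u < n -> sk_sigma n f b u %% e = iter u g (b %% e).
Proof.
elim: u b => [|u IHu] b u_lt; first exact: sk_sigma0 (ltnW n_gt1).
have -> : sk_sigma n f b u.+1 = sk_sigma n f b ((1 + u) %% n) by rewrite modn_small.
rewrite sk_sigma_cocycle ?IHu ?(ltnW u_lt) //.
by rewrite iterSr /sk_deriv_map -sk_sigma_mod.
Qed.

Lemma sk_deriv_mapP k z : z < n ->
  iter k f ((1 + z) %% n) = (iter k f 1 + iter (g k) f z) %% n.
Proof. by move=> z_lt; rewrite sk_sigmaP // (iter_mod _ z_lt). Qed.

Lemma sk_deriv_map_inj a a' : a < e -> a' < e -> g a = g a' -> a = a'.
Proof.
move=> a_lt a'_lt g_eq; rewrite -(modn_small a_lt) -(modn_small a'_lt).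
have n1_lt : n.-1 < n by rewrite prednK ?(ltnW n_gt1).
(* At z = n - 1 the left-hand side is f^a(0) = 0, so g a determines f^a(1). *)
have f1_eq : iter a f 1 = iter a' f 1.
  have := sk_deriv_mapP a n1_lt; have := sk_deriv_mapP a' n1_lt.
  rewrite add1n prednK ?(ltnW n_gt1) // modnn !(iter_fix _ f0) g_eq => E' E.
  apply: (@eq_modDl_small n (iter (g a') f n.-1)); rewrite ?iter_lt //.
  by rewrite ![iter (g a') f n.-1 + _]addnC -E -E'.
apply: eq_iter_mod => -[|z] z_lt; first by rewrite !(iter_fix _ f0).
by rewrite -[z.+1](modn_small z_lt) -add1n !sk_deriv_mapP ?f1_eq ?g_eq ?(ltnW z_lt).
Qed.

Lemma sk_deriv_mapD a b : b < e ->
  g ((a + b) %% e) = (g a + iter (iter a f 1) g b) %% e.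
Proof.
move=> b_lt; rewrite {1}/sk_deriv_map -sk_sigma_mod // sk_sigmaD -modnDmr.
by rewrite sk_sigma_iter ?iter_lt // (modn_small b_lt) -modnDml.
Qed.

Lemma sk_deriv_map_skew : is_skew e g.
Proof.
split; [split | split].
- by move=> x _; rewrite ltn_pmod.
- exact: sk_deriv_map_inj.
- by rewrite /sk_deriv_map /sk_sigma big_ord0 mod0n.
- by move=> a _; exists (iter a f 1) => b; apply: sk_deriv_mapD.
Qed.

End SkewMorphism.

Lemma trivial_perm_on n f : is_trivial n f -> is_perm_on n f.
Proof. by move=> fT; split=> [x x_lt | x y x_lt y_lt]; rewrite !fT. Qed.

Lemma sk_ord_trivial n f : is_trivial n f -> sk_ord n f = 1.
Proof.
move=> fT; have [e_gt0 _ e_min] := sk_ordP (trivial_perm_on fT).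
apply/eqP; rewrite eqn_leq e_gt0 andbT leqNgt; apply/negP => e_gt1.
by have [x x_lt] := e_min 1 e_gt1; rewrite /= fT ?eqxx.
Qed.

Lemma perm_on_small_trivial n f : n <= 1 -> is_perm_on n f -> is_trivial n f.
Proof.
move=> n_le1 [f_lt _] x x_lt; have x0 : x = 0 by lia.
by have := f_lt x x_lt; rewrite x0; lia.
Qed.

Lemma sk_deriv_fst p : (sk_deriv p).1 = sk_ord p.1 p.2.
Proof. by case: p. Qed.

Lemma sk_deriv_skew p : is_skew p.1 p.2 -> is_skew (sk_deriv p).1 (sk_deriv p).2.
Proof.
case: p => n f /= fS; have [n_le1 | n_gt1] := leqP n 1; last exact: sk_deriv_map_skew.
rewrite sk_ord_trivial; last by case: fS => fP _; apply: perm_on_small_trivial.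
split; [split | split] => [x _ | x y | | a _]; rewrite ?modn1 //; first lia.
by exists 0 => b _; rewrite !modn1.
Qed.

Lemma trivial_aut n f : is_trivial n f -> is_aut n f.
Proof.
move=> fT; split=> [|a b a_lt b_lt]; first exact: trivial_perm_on.
by rewrite !fT // ltn_pmod // (leq_ltn_trans _ a_lt).
Qed.

Lemma aut_sk_pow n f a : is_skew n f -> is_aut n f -> a < n ->
  sk_pow n f a = 1 %[mod sk_ord n f].
Proof.
move=> fS [fP f_add] a_lt; apply: (eq_iter_mod_ord fP) => z z_lt.
have [f_lt _] := fP.
apply: (@eq_modDl_small n (f a)); rewrite ?(iter_perm_lt fP) ?f_lt //.
by rewrite -sk_powP // f_add.
Qed.

Lemma sk_pow1_aut n f : is_skew n f -> 1 < n ->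
  sk_pow n f 1 = 1 %[mod sk_ord n f] -> is_aut n f.
Proof.
move=> fS n_gt1 pow1; have [fP [f0 _]] := fS; have [f_lt _] := fP.
have f_add1 b : b < n -> f ((1 + b) %% n) = (f 1 + f b) %% n.
  by move=> b_lt; rewrite sk_powP // (iter_mod_ord fP) // pow1 -iter_mod_ord.
have f_lin a : a < n -> f a = (a * f 1) %% n.
  elim: a => [|a IHa] a_lt; first by rewrite f0 mod0n.
  rewrite -(modn_small a_lt) -add1n f_add1 ?IHa ?(ltnW a_lt) //.
  by rewrite modnDmr modnMml add1n mulSn.
split=> // a b a_lt b_lt.
rewrite f_lin ?ltn_pmod ?(leq_ltn_trans _ a_lt) // (f_lin a) // (f_lin b) //.
by rewrite modnMml modnDm mulnDl.
Qed.

Lemma aut_iff_sk_deriv_trivial p : is_skew p.1 p.2 ->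
  is_aut p.1 p.2 <-> is_trivial (sk_deriv p).1 (sk_deriv p).2.
Proof.
case: p => n f /= fS; have fP : is_perm_on n f by case: fS.
have [e_gt0 e_id _] := sk_ordP fP.
split=> [f_aut x x_lt | gT].
  have [n_le1 | n_gt1] := leqP n 1.
    move: x_lt; rewrite (sk_ord_trivial (perm_on_small_trivial n_le1 fP)) //.
    by rewrite ltnS leqn0 => /eqP ->; rewrite big_ord0.
  rewrite -modn_summ (eq_bigr (fun=> 1 %% sk_ord n f)) => [|i _].
    by rewrite sum_nat_const card_ord modnMmr muln1 modn_small.
  by rewrite (aut_sk_pow fS f_aut) ?(iter_perm_lt fP).
have [e_gt1 | e_le1] := ltnP 1 (sk_ord n f).
  apply: sk_pow1_aut => //.
    rewrite ltnNge; apply/negP => n_le1; move: e_gt1.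
    by rewrite (sk_ord_trivial (perm_on_small_trivial n_le1 fP)).
  by have := gT 1 e_gt1; rewrite big_ord1 (modn_small e_gt1).
apply: trivial_aut => x x_lt.
by have := e_id x x_lt; have -> : sk_ord n f = 1 by apply/eqP; rewrite eqn_leq e_le1.
Qed.

Lemma sk_deriv_trivial p : is_trivial p.1 p.2 ->
  (sk_deriv p).1 = 1 /\ is_trivial (sk_deriv p).1 (sk_deriv p).2.
Proof.
case: p => n f /= fT; rewrite sk_ord_trivial //; split=> // x.
by rewrite ltnS leqn0 => /eqP ->; rewrite modn1.
Qed.

Lemma sk_deriv_iterS j n f : sk_deriv_iter j.+1 n f = sk_deriv (sk_deriv_iter j n f).
Proof. by []. Qed.

Lemma sk_deriv_iterSr j n f :
  sk_deriv_iter j.+1 n f = sk_deriv_iter j (sk_deriv (n, f)).1 (sk_deriv (n, f)).2.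
Proof. exact: iterSr. Qed.

Lemma sk_deriv_iter_skew j n f : is_skew n f ->
  is_skew (sk_deriv_iter j n f).1 (sk_deriv_iter j n f).2.
Proof. by move=> fS; elim: j => // j IHj; rewrite sk_deriv_iterS; apply: sk_deriv_skew. Qed.

Lemma sk_deriv_iter_trivial j k n f :
  is_trivial (sk_deriv_iter j n f).1 (sk_deriv_iter j n f).2 -> j <= k ->
  is_trivial (sk_deriv_iter k n f).1 (sk_deriv_iter k n f).2.
Proof.
move=> jT; elim: k => [|k IHk]; first by rewrite leqn0 => /eqP j0; rewrite -j0.
rewrite leq_eqVlt => /predU1P[<- // | /IHk kT].
by rewrite sk_deriv_iterS; case: (sk_deriv_trivial kT).
Qed.

Lemma sk_complexity_le n f c m j : sk_complexity n f c m ->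
  is_trivial (sk_deriv_iter j n f).1 (sk_deriv_iter j n f).2 -> c <= j.
Proof.
move=> [Em [m_ge2 _]] jT; rewrite leqNgt; apply/negP => j_lt.
have c_gt0 : 0 < c by apply: leq_ltn_trans j_lt.
have j_le : j <= c.-1 by rewrite -ltnS prednK.
have [ord1 _] := sk_deriv_trivial (sk_deriv_iter_trivial jT j_le).
by move: m_ge2; rewrite -Em -(prednK c_gt0) sk_deriv_iterS ord1.
Qed.

Lemma sk_complexity_deriv n f c m : sk_complexity n f c m -> 0 < c ->
  sk_complexity (sk_deriv (n, f)).1 (sk_deriv (n, f)).2 (c - 1) m.
Proof. by move=> cm c_gt0; rewrite /sk_complexity -sk_deriv_iterSr subn1 prednK. Qed.

Lemma sk_complexity_last_aut n f c m : is_skew n f -> sk_complexity n f c m -> 0 < c ->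
  is_aut (sk_deriv_iter (c - 1) n f).1 (sk_deriv_iter (c - 1) n f).2 /\
  sk_ord (sk_deriv_iter (c - 1) n f).1 (sk_deriv_iter (c - 1) n f).2 = m.
Proof.
move=> fS [Em [_ cT]] c_gt0.
have q_deriv : sk_deriv (sk_deriv_iter (c - 1) n f) = sk_deriv_iter c n f.
  by rewrite -sk_deriv_iterS subn1 prednK.
split; last by rewrite -sk_deriv_fst q_deriv.
by apply/(aut_iff_sk_deriv_trivial (sk_deriv_iter_skew _ fS)); rewrite q_deriv.
Qed.

Theorem lemma4p1 (n : nat) (f : nat -> nat) (c m : nat) :
  2 <= n -> is_skew n f -> sk_complexity n f c m ->
  ((0 <= c /\ 2 <= m) /\
   (is_trivial n f <-> c = 0) /\
   ((is_aut n f /\ ~ is_trivial n f) <-> c = 1) /\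
   (~ is_aut n f <-> 2 <= c) /\
   (1 <= c ->
      sk_complexity (sk_deriv (n, f)).1 (sk_deriv (n, f)).2 (c - 1) m) /\
   (1 <= c ->
      is_aut (sk_deriv_iter (c - 1) n f).1 (sk_deriv_iter (c - 1) n f).2 /\
      sk_ord (sk_deriv_iter (c - 1) n f).1 (sk_deriv_iter (c - 1) n f).2 = m)).
Proof.
move=> _ fS cm; have [_ [m_ge2 cT]] := cm.
have trivial_c0 : is_trivial n f <-> c = 0.
  split=> [fT | c0]; last by move: cT; rewrite c0.
  by apply/eqP; rewrite -leqn0; exact: (sk_complexity_le (j := 0) cm).
have aut_c_le1 : is_aut n f -> c <= 1.
  by move/(@aut_iff_sk_deriv_trivial (n, f) fS); apply: (sk_complexity_le (j := 1) cm).
have aut_c1 : c = 1 -> is_aut n f.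
  by move=> c1; have [] := sk_complexity_last_aut fS cm; rewrite c1.
split=> //; split=> //; split.
  split=> [[f_aut fNT] | c1]; last by rewrite trivial_c0 c1; split=> //; apply: aut_c1.
  apply/eqP; rewrite eqn_leq aut_c_le1 // lt0n; apply/eqP => c0.
  by apply/fNT/trivial_c0.
split.
  split=> [fNA | c_ge2 /aut_c_le1]; last by lia.
  rewrite ltnNge; apply/negP => c_le1; apply: fNA.
  have [c0 | c1] : c = 0 \/ c = 1 by lia.
    by apply/trivial_aut/trivial_c0.
  exact: aut_c1.
split; first exact: sk_complexity_deriv.
exact: sk_complexity_last_aut.
Qed.
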